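(* Let $k\ge3$ be an integer and let $I=(a_1,\dots,a_n)\in(0,1]^n$ with $n\le k$ and $\sum_{i=1}^n a_i\le1$. Then $w_2(I):=\sum_{i=1}^n w_2(a_i)\le\lambda_k-\frac1k$.
   Context: Define $\pi_1=2$, $\pi_{i+1}=\pi_i(\pi_i-1)+1$ for $i\ge1$, and $\lambda_j=\sum_{i=1}^j\max\{\frac{1}{\pi_i-1},\frac1j\}$ for $j\ge1$. For fixed $k$, the weight function $w_2:(0,1]\to\mathbb{R}$ is $w_2(x)=1-\frac1k$ for $x\in(\frac12,1]$; $w_2(x)=\frac1j$ for $x\in(\frac{1}{j+1},\frac1j]$, $j=2,\dots,k-1$; and $w_2(x)=\frac1k$ for $x\in(0,\frac1k]$. *)

From Stdlib Require Import Reals Lra List.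
Import ListNotations.
Open Scope R_scope.

(* Sylvester sequence, 0-indexed: sylv0 i = pi_(i+1).
   pi_1 = 2, pi_(i+1) = pi_i (pi_i - 1) + 1. *)
Fixpoint sylv0 (i : nat) : R :=
  match i with
  | O => 2
  | S i' => sylv0 i' * (sylv0 i' - 1) + 1
  end.

(* pi_i for i >= 1 (pi_0 is never used). *)
Definition pi_ (i : nat) : R := sylv0 (i - 1).

Definition lambda (j : nat) : R :=
  fold_right Rplus 0
    (map (fun i => Rmax (1 / (pi_ i - 1)) (1 / INR j)) (seq 1 j)).

Definition w2 (k : nat) (x : R) : R :=
  if Rlt_dec (1/2) x then 1 - 1 / INR k
  else if Rle_dec x (1 / INR k) then 1 / INR k
  else 1 / IZR (Int_part (1 / x)).

Definition sumR (l : list R) : R := fold_right Rplus 0 l.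

From Stdlib Require Import Reals Lra Lia List Permutation.
Open Scope R_scope.

(* Write w_2(x) = 1/k + e(x) and lambda_k = 1 + sum_{j <= k} g_j with
   g_j = max(0, 1/(pi_j - 1) - 1/k): the at most k items contribute at most 1
   through their 1/k parts, and only the excesses e have to be bounded.
   If all items are at most 1/2, then e(x) <= (3/2 - 3/k) x, so the total
   excess is at most 3/2 - 3/k = g_1 + g_2 - 1/k.
   Otherwise the big item has excess g_1 - 1/k, and the others, of total size
   at most 1/2 = 1/(pi_2 - 1), are handled greedily along the Sylvester
   sequence.  Given items of total size at most 1/(pi_i - 1), either one of
   them exceeds 1/pi_i: it has excess at most g_i and leaves a total of at
   most 1/(pi_i - 1) - 1/pi_i = 1/(pi_(i+1) - 1); or all of them are at most
   1/pi_i: then every item of positive excess has w_2(x) <= (1 + 1/pi_i) x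
   and excess at most 1/pi_i - 1/k, so a single such item costs at most g_i,
   while two or more pay 1/k each out of
   (1 + 1/pi_i) / (pi_i - 1) = 1/(pi_i - 1) + 1/(pi_(i+1) - 1); either way the
   total excess is at most g_i + g_(i+1).  Once pi_i - 1 >= k, all items
   are at most 1/k and have no excess. *)

Lemma sumR_cons (a : R) (l : list R) : sumR (a :: l) = a + sumR l.
Proof. reflexivity. Qed.

Lemma sumR_perm (l1 l2 : list R) : Permutation l1 l2 -> sumR l1 = sumR l2.
Proof. unfold sumR; induction 1; simpl; lra. Qed.

Lemma sumR_map_le (f g : R -> R) (L : list R) :
  Forall (fun x => f x <= g x) L -> sumR (map f L) <= sumR (map g L).
Proof. unfold sumR; induction 1; simpl; lra. Qed.

Lemma sumR_map_scal (c : R) (L : list R) :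
  sumR (map (fun x => c * x) L) = c * sumR L.
Proof. unfold sumR; induction L as [|x L IH]; simpl; [|rewrite IH]; ring. Qed.

Lemma sumR_map_add_const {A : Type} (f : A -> R) (c : R) (L : list A) :
  sumR (map (fun x => f x + c) L) = sumR (map f L) + INR (length L) * c.
Proof.
  unfold sumR; induction L as [|x L IH]; simpl length; [simpl; ring|].
  rewrite S_INR; simpl; rewrite IH; ring.
Qed.

Lemma sumR_nonneg (L : list R) : Forall (Rle 0) L -> 0 <= sumR L.
Proof. unfold sumR; induction 1; simpl; lra. Qed.

Lemma In_le_sumR (L : list R) (x : R) : Forall (Rle 0) L -> In x L -> x <= sumR L.
Proof.
  induction 1 as [|y L Hy HL IH]; [destruct 1|].
  pose proof (sumR_nonneg L HL). unfold sumR in *; simpl.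
  intros [<-|Hx]; [|specialize (IH Hx)]; lra.
Qed.

Lemma In_Permutation_cons {A : Type} (L : list A) (x : A) :
  In x L -> exists l, Permutation L (x :: l).
Proof.
  intros Hx. destruct (in_split x L Hx) as (l1 & l2 & ->).
  exists (l1 ++ l2). symmetry. apply Permutation_middle.
Qed.

Lemma seq_cons_pred (s n : nat) : (1 <= n)%nat -> seq s n = s :: seq (S s) (n - 1).
Proof. intros Hn. destruct n as [|n]; [lia|]. simpl. rewrite Nat.sub_0_r. reflexivity. Qed.

Lemma Rdiv_1_le_contravar (a b : R) : 0 < a -> a <= b -> 1 / b <= 1 / a.
Proof. intros Ha Hab. unfold Rdiv; rewrite !Rmult_1_l. apply Rinv_le_contravar; assumption. Qed.

Lemma Rmult_le_1_of_le_inv (q x : R) : 0 < q -> x <= 1 / q -> q * x <= 1.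
Proof.
  intros Hq Hx. apply (Rmult_le_compat_l q) in Hx; [|lra].
  replace (q * (1 / q)) with 1 in Hx by (field; lra). exact Hx.
Qed.

Lemma Rmax_eq_plus (a b : R) : Rmax a b = Rmax 0 (a - b) + b.
Proof. unfold Rmax; repeat destruct Rle_dec; lra. Qed.

Lemma Zle_of_IZR_lt_succ (q j : Z) : IZR q < IZR j + 1 -> (q <= j)%Z.
Proof. intros H. rewrite <- plus_IZR in H. apply lt_IZR in H. lia. Qed.

(* No term of positive [f], a single one, or at least two, each paying [e]. *)
Lemma sumR_map_trichotomy (f : R -> R) (a e c : R) (L : list R) :
  0 <= e -> 0 <= c ->
  Forall (fun x => 0 <= x /\ 0 <= f x /\ (0 < f x -> f x <= a /\ f x + e <= c * x)) L ->
  sumR (map f L) = 0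
  \/ (sumR (map f L) <= a /\ sumR (map f L) + e <= c * sumR L)
  \/ sumR (map f L) + 2 * e <= c * sumR L.
Proof.
  intros He Hc.
  induction 1 as [|y L [Hy [Hfy Hpos]] HL IH]; [now left|].
  assert (HS : 0 <= sumR L).
  { apply sumR_nonneg. eapply Forall_impl; [|exact HL]. simpl; tauto. }
  unfold sumR in *; simpl.
  destruct (Rle_lt_or_eq_dec 0 (f y) Hfy) as [Hy0|Hy0].
  - destruct (Hpos Hy0) as [Hya Hyc].
    destruct IH as [IH|[[IH1 IH2]|IH]]; [right; left; rewrite IH; split|right; right|right; right]; nra.
  - rewrite <- Hy0.
    destruct IH as [IH|[[IH1 IH2]|IH]]; [left|right; left; split|right; right]; nra.
Qed.

Lemma pi_1 : pi_ 1 = 2.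
Proof. reflexivity. Qed.

Lemma pi_2 : pi_ 2 = 3.
Proof. unfold pi_; simpl; lra. Qed.

Lemma pi_succ (i : nat) : (1 <= i)%nat -> pi_ (S i) = pi_ i * (pi_ i - 1) + 1.
Proof. intros Hi. destruct i as [|i]; [lia|]. unfold pi_; simpl. rewrite Nat.sub_0_r. reflexivity. Qed.

Lemma pi_integer (i : nat) : exists z : Z, pi_ i = IZR z.
Proof.
  unfold pi_. induction (i - 1)%nat as [|n [z Hz]]; [now exists 2%Z|].
  exists (z * (z - 1) + 1)%Z. simpl. rewrite Hz, plus_IZR, mult_IZR, minus_IZR. reflexivity.
Qed.

Lemma pi_ge (i : nat) : (1 <= i)%nat -> INR i + 1 <= pi_ i.
Proof.
  induction i as [|i IH]; intros Hi; [lia|].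
  destruct (Nat.eq_dec i 0) as [->|Hi0]; [rewrite pi_1; simpl; lra|].
  specialize (IH ltac:(lia)). rewrite pi_succ, S_INR by lia.
  assert (1 <= INR i) by (apply (le_INR 1); lia). nra.
Qed.

Definition gap (k j : nat) : R := Rmax 0 (1 / (pi_ j - 1) - 1 / INR k).

Lemma gaps_nonneg (k : nat) (s : list nat) : Forall (Rle 0) (map (gap k) s).
Proof. apply Forall_map, Forall_forall. intros j _. apply Rmax_l. Qed.

Lemma lambda_eq_gaps (k : nat) : (1 <= k)%nat ->
  lambda k = 1 + sumR (map (gap k) (seq 1 k)).
Proof.
  intros Hk. assert (HK : 0 < INR k) by (apply lt_0_INR; lia).
  unfold lambda. change (fold_right Rplus 0) with sumR.
  rewrite (map_ext _ (fun j => gap k j + 1 / INR k)) by (intros; apply Rmax_eq_plus).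
  rewrite sumR_map_add_const, length_seq. unfold gap. field. lra.
Qed.

Lemma gap_le_sum_gaps (k i N : nat) : (1 <= k)%nat -> INR k <= pi_ (i + N) - 1 ->
  gap k i <= sumR (map (gap k) (seq i N)).
Proof.
  intros Hk HN. assert (HK : 0 < INR k) by (apply lt_0_INR; lia).
  destruct N as [|N].
  - rewrite Nat.add_0_r in HN. unfold gap. rewrite Rmax_left; [unfold sumR; simpl; lra|].
    enough (1 / (pi_ i - 1) <= 1 / INR k) by lra.
    apply Rdiv_1_le_contravar; lra.
  - apply In_le_sumR; [apply gaps_nonneg|apply in_map, in_seq; lia].
Qed.

Lemma gap_succ (k i : nat) : (1 <= i)%nat ->
  gap k (S i) = Rmax 0 (1 / (pi_ i * (pi_ i - 1)) - 1 / INR k).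
Proof.
  intros Hi. unfold gap. rewrite pi_succ by exact Hi.
  replace (pi_ i * (pi_ i - 1) + 1 - 1) with (pi_ i * (pi_ i - 1)) by ring. reflexivity.
Qed.

Definition excess (k : nat) (x : R) : R := w2 k x - 1 / INR k.

Lemma w2_big (k : nat) (x : R) : 1 / 2 < x -> w2 k x = 1 - 1 / INR k.
Proof. intros Hx. unfold w2. destruct (Rlt_dec (1 / 2) x); lra. Qed.

Lemma sumR_w2_eq_excess (k : nat) (L : list R) :
  sumR (map (w2 k) L) = sumR (map (excess k) L) + INR (length L) * (1 / INR k).
Proof.
  rewrite <- sumR_map_add_const. f_equal. apply map_ext. intros x. unfold excess. ring.
Qed.

Section Weight.

Variable k : nat.
Hypothesis Hk : (3 <= k)%nat.

Lemma INR_k_ge3 : 3 <= INR k.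
Proof. apply (le_INR 3) in Hk. simpl in Hk. lra. Qed.

Lemma inv_k_pos : 0 < 1 / INR k.
Proof. pose proof INR_k_ge3. apply Rdiv_lt_0_compat; lra. Qed.

Lemma inv_k_le_third : 1 / INR k <= 1 / 3.
Proof. pose proof INR_k_ge3. apply Rdiv_1_le_contravar; lra. Qed.

Lemma gap_1 : gap k 1 = 1 - 1 / INR k.
Proof.
  unfold gap. rewrite pi_1. replace (1 / (2 - 1)) with 1 by field.
  pose proof inv_k_le_third. apply Rmax_right. lra.
Qed.

Lemma gap_2 : gap k 2 = 1 / 2 - 1 / INR k.
Proof.
  unfold gap. rewrite pi_2. replace (3 - 1) with 2 by ring.
  pose proof inv_k_le_third. apply Rmax_right. lra.
Qed.

Lemma w2_small (x : R) : x <= 1 / INR k -> w2 k x = 1 / INR k.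
Proof.
  intros Hx. pose proof inv_k_le_third. unfold w2.
  destruct (Rlt_dec (1 / 2) x); [lra|]. destruct (Rle_dec x (1 / INR k)); lra.
Qed.

Lemma w2_mid_spec (x : R) : 1 / INR k < x -> x <= 1 / 2 ->
  exists j : Z, w2 k x = 1 / IZR j /\ (2 <= j)%Z /\ IZR j + 1 <= INR k
              /\ IZR j * x <= 1 < (IZR j + 1) * x.
Proof.
  intros Hkx Hx2. pose proof INR_k_ge3 as HK.
  assert (Hx : 0 < x) by (pose proof inv_k_pos; lra).
  exists (Int_part (1 / x)).
  destruct (base_Int_part (1 / x)) as [Hlo Hhi].
  set (J := IZR (Int_part (1 / x))) in *.
  assert (Hinv : 1 / x * x = 1) by (field; lra).
  assert (HJx : J * x <= 1) by nra.
  assert (HJx1 : 1 < (J + 1) * x) by nra.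
  assert (Hkx' : 1 < INR k * x) by (assert (INR k * (1 / INR k) = 1) by (field; lra); nra).
  repeat split; [| | |exact HJx|exact HJx1].
  - unfold w2. destruct (Rlt_dec (1 / 2) x); [lra|]. destruct (Rle_dec x (1 / INR k)); [lra|].
    reflexivity.
  - apply Zle_of_IZR_lt_succ. fold J. nra.
  - assert (HJk : J < INR k) by nra.
    rewrite INR_IZR_INZ in *. apply lt_IZR in HJk.
    assert (Hj : (Int_part (1 / x) + 1 <= Z.of_nat k)%Z) by lia.
    apply IZR_le in Hj. rewrite plus_IZR in Hj. exact Hj.
Qed.

Lemma w2_le_Rmax_inv (q : Z) (x : R) : (1 <= q)%Z -> 0 < x -> x <= 1 / 2 -> IZR q * x <= 1 ->
  w2 k x <= Rmax (1 / IZR q) (1 / INR k).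
Proof.
  intros Hq Hx Hx2 Hqx. destruct (Rle_dec x (1 / INR k)) as [Hs|Hs].
  - rewrite w2_small by lra. apply Rmax_r.
  - destruct (w2_mid_spec x) as (j & -> & _ & _ & _ & Hjx); [lra|lra|].
    eapply Rle_trans; [|apply Rmax_l].
    assert (Hqj : (q <= j)%Z) by (apply Zle_of_IZR_lt_succ; nra).
    apply IZR_le in Hq, Hqj. apply Rdiv_1_le_contravar; simpl in *; lra.
Qed.

Lemma w2_mul_le (q : Z) (x : R) : (1 <= q)%Z -> 0 < x -> x <= 1 / 2 -> IZR q * x <= 1 ->
  1 / INR k < w2 k x -> w2 k x * IZR q <= (IZR q + 1) * x.
Proof.
  intros Hq Hx Hx2 Hqx Hw. destruct (Rle_dec x (1 / INR k)) as [Hs|Hs].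
  - rewrite w2_small in Hw; lra.
  - destruct (w2_mid_spec x) as (j & -> & Hj2 & _ & _ & Hjx); [lra|lra|].
    assert (Hqj : (q <= j)%Z) by (apply Zle_of_IZR_lt_succ; nra).
    apply IZR_le in Hq, Hqj, Hj2. simpl in *.
    set (J := IZR j) in *. set (Q := IZR q) in *.
    apply (Rmult_le_reg_r (J * (J + 1))); [nra|].
    replace (1 / J * Q * (J * (J + 1))) with (Q * (J + 1)) by (field; lra).
    assert (Q * (J + 1) <= (Q + 1) * J) by lra.
    assert ((Q + 1) * J * 1 <= (Q + 1) * J * ((J + 1) * x)) by (apply Rmult_le_compat_l; nra).
    nra.
Qed.

Lemma excess_le_linear (x : R) : 0 < x -> x <= 1 / 2 ->
  excess k x <= (3 / 2 - 3 / INR k) * x.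
Proof.
  intros Hx Hx2. unfold excess.
  assert (Hc : 0 <= 3 / 2 - 3 / INR k) by (pose proof inv_k_le_third; lra).
  destruct (Rle_dec x (1 / INR k)) as [Hs|Hs].
  - rewrite w2_small by lra. nra.
  - destruct (w2_mid_spec x) as (j & -> & Hj2 & Hjk & _ & Hjx); [lra|lra|].
    apply IZR_le in Hj2. simpl in Hj2. set (J := IZR j) in *. set (K := INR k) in *.
    assert (Hid : (3 / 2 - 3 / K) / (J + 1) - (1 / J - 1 / K)
                  = (J - 2) * (K / 2 + J) / (J * K * (J + 1))) by (field; lra).
    assert (0 <= (J - 2) * (K / 2 + J) / (J * K * (J + 1))).
    { apply Rle_mult_inv_pos; [nra|]. apply Rmult_lt_0_compat; [apply Rmult_lt_0_compat|]; lra. }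
    assert ((3 / 2 - 3 / K) / (J + 1) <= (3 / 2 - 3 / K) * x).
    { apply Rmult_le_compat_l; [lra|].
      apply (Rmult_le_reg_r (J + 1)); [lra|]. rewrite Rinv_l; lra. }
    lra.
Qed.

Lemma excess_nonneg (x : R) : 0 < x -> x <= 1 / 2 -> 0 <= excess k x.
Proof.
  intros Hx Hx2. unfold excess. destruct (Rle_dec x (1 / INR k)) as [Hs|Hs].
  - rewrite w2_small; lra.
  - destruct (w2_mid_spec x) as (j & -> & Hj2 & Hjk & _); [lra|lra|].
    apply IZR_le in Hj2. enough (1 / INR k <= 1 / IZR j) by lra.
    apply Rdiv_1_le_contravar; simpl in *; lra.
Qed.

Lemma excess_pos_bounds (p : Z) (x : R) : (2 <= p)%Z -> 0 < x -> x <= 1 / IZR p ->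
  0 < excess k x ->
  excess k x <= 1 / IZR p - 1 / INR k /\ excess k x + 1 / INR k <= (IZR p + 1) / IZR p * x.
Proof.
  intros Hp Hx HxP Hpos. unfold excess in *.
  assert (HP : 2 <= IZR p) by (apply (IZR_le 2); exact Hp).
  assert (Hx2 : x <= 1 / 2) by (eapply Rle_trans; [exact HxP|]; apply Rdiv_1_le_contravar; lra).
  pose proof (Rmult_le_1_of_le_inv (IZR p) x ltac:(lra) HxP) as HPx.
  split.
  - pose proof (w2_le_Rmax_inv p x ltac:(lia) Hx Hx2 HPx) as Hw.
    unfold Rmax in Hw; destruct Rle_dec in Hw; lra.
  - pose proof (w2_mul_le p x ltac:(lia) Hx Hx2 HPx ltac:(lra)) as Hw.
    enough (w2 k x <= (IZR p + 1) / IZR p * x) by lra.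
    apply (Rmult_le_reg_r (IZR p)); [lra|].
    replace ((IZR p + 1) / IZR p * x * IZR p) with ((IZR p + 1) * x) by (field; lra). exact Hw.
Qed.

Lemma excess_sum_le_of_small_items (p : Z) (L : list R) : (2 <= p)%Z ->
  Forall (fun x => 0 < x <= 1 / IZR p) L -> sumR L <= 1 / (IZR p - 1) ->
  sumR (map (excess k) L)
  <= Rmax 0 (1 / (IZR p - 1) - 1 / INR k) + Rmax 0 (1 / (IZR p * (IZR p - 1)) - 1 / INR k).
Proof.
  intros Hp HL HS. pose proof inv_k_pos as Hk0.
  assert (HP : 2 <= IZR p) by (apply (IZR_le 2); exact Hp).
  assert (Hc : 0 <= (IZR p + 1) / IZR p) by (apply Rlt_le, Rdiv_lt_0_compat; lra).
  assert (Hitems : Forall (fun x => 0 <= x /\ 0 <= excess k x /\ (0 < excess k x ->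
            excess k x <= 1 / IZR p - 1 / INR k
            /\ excess k x + 1 / INR k <= (IZR p + 1) / IZR p * x)) L).
  { eapply Forall_impl; [|exact HL]. intros x [Hx HxP].
    assert (HP2 : 1 / IZR p <= 1 / 2) by (apply Rdiv_1_le_contravar; lra).
    split; [lra|]. split; [apply excess_nonneg; lra|]. apply excess_pos_bounds; assumption. }
  set (P := IZR p) in *.
  pose proof (Rmax_l 0 (1 / (P - 1) - 1 / INR k)). pose proof (Rmax_r 0 (1 / (P - 1) - 1 / INR k)).
  pose proof (Rmax_l 0 (1 / (P * (P - 1)) - 1 / INR k)).
  pose proof (Rmax_r 0 (1 / (P * (P - 1)) - 1 / INR k)).
  destruct (sumR_map_trichotomy _ _ (1 / INR k) _ L ltac:(lra) Hc Hitems) as [Hnone|[[Hone _]|Hmany]].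
  - lra.
  - enough (1 / P <= 1 / (P - 1)) by lra. apply Rdiv_1_le_contravar; lra.
  - assert (HcS : (P + 1) / P * sumR L <= (P + 1) / P * (1 / (P - 1))) by (apply Rmult_le_compat_l; lra).
    replace ((P + 1) / P * (1 / (P - 1))) with (1 / (P - 1) + 1 / (P * (P - 1))) in HcS by (field; lra).
    lra.
Qed.

Lemma excess_le_gap (i : nat) (x : R) : (2 <= i)%nat -> 0 < x -> x <= 1 / (pi_ i - 1) ->
  excess k x <= gap k i.
Proof.
  intros Hi Hx Hxi. pose proof (pi_ge i ltac:(lia)) as Hp. apply (le_INR 2) in Hi. simpl in Hi.
  destruct (pi_integer i) as [z Hz].
  assert (Hz3 : (3 <= z)%Z) by (apply le_IZR; lra).
  assert (Hz1 : IZR (z - 1) = pi_ i - 1) by (rewrite minus_IZR, Hz; reflexivity).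
  assert (Hx2 : x <= 1 / 2) by (eapply Rle_trans; [exact Hxi|]; apply Rdiv_1_le_contravar; lra).
  assert (Hzx : IZR (z - 1) * x <= 1) by (rewrite Hz1; apply Rmult_le_1_of_le_inv; lra).
  pose proof (w2_le_Rmax_inv (z - 1) x ltac:(lia) Hx Hx2 Hzx) as Hw.
  rewrite Hz1, Rmax_eq_plus in Hw. unfold excess, gap. lra.
Qed.

Lemma excess_sum_le_gaps (N : nat) : forall (i : nat) (L : list R), (2 <= i)%nat ->
  INR k <= pi_ (i + N) - 1 -> Forall (fun x => 0 < x) L -> sumR L <= 1 / (pi_ i - 1) ->
  sumR (map (excess k) L) <= sumR (map (gap k) (seq i N)).
Proof.
  induction N as [|N IH]; intros i L Hi HN HL HS.
  { assert (Hgap : gap k i <= 0) by (apply (gap_le_sum_gaps k i 0); [lia|exact HN]).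
    apply Rle_trans with (sumR (map (fun x => 0 * x) L)).
    - apply sumR_map_le, Forall_forall. intros x Hx.
      pose proof (In_le_sumR L x (Forall_impl _ (fun y Hy => Rlt_le 0 y Hy) HL) Hx).
      rewrite Forall_forall in HL. pose proof (excess_le_gap i x Hi (HL x Hx) ltac:(lra)). lra.
    - rewrite sumR_map_scal, Rmult_0_l. apply Rle_refl. }
  pose proof (pi_ge i ltac:(lia)) as Hp. apply (le_INR 2) in Hi as Hi'. simpl in Hi'.
  set (p := pi_ i) in *.
  simpl seq. simpl map. rewrite sumR_cons.
  destruct (Forall_Exists_dec (fun x => x <= 1 / p) (fun x => Rle_dec x (1 / p)) L) as [Hsmall|Hbig].
  - destruct (pi_integer i) as [z Hz]. fold p in Hz.
    assert (Hz2 : (2 <= z)%Z) by (apply le_IZR; lra).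
    eapply Rle_trans.
    { apply (excess_sum_le_of_small_items z L Hz2); rewrite <- Hz; [apply Forall_and|]; assumption. }
    assert (Hnext : gap k (S i) <= sumR (map (gap k) (seq (S i) N))).
    { apply gap_le_sum_gaps; [lia|]. rewrite Nat.add_succ_l, <- Nat.add_succ_r. exact HN. }
    rewrite gap_succ in Hnext by lia. fold p in Hnext.
    change (gap k i) with (Rmax 0 (1 / (p - 1) - 1 / INR k)). rewrite <- Hz. lra.
  - apply Exists_exists in Hbig as (x & Hx & Hxp).
    destruct (In_Permutation_cons L x Hx) as [l Hperm].
    rewrite (sumR_perm _ _ (Permutation_map _ Hperm)).
    rewrite (sumR_perm _ _ Hperm) in HS. apply (Permutation_Forall Hperm), Forall_cons_iff in HL as [Hx0 Hl].
    simpl map. rewrite sumR_cons in HS |- *.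
    assert (Hl0 : 0 <= sumR l) by (apply sumR_nonneg; eapply Forall_impl; [|exact Hl]; intros a Ha; lra).
    apply Rplus_le_compat; [apply excess_le_gap; auto; fold p; lra|].
    apply IH; [lia|rewrite Nat.add_succ_l, <- Nat.add_succ_r; exact HN|exact Hl|].
    rewrite pi_succ by lia. fold p.
    replace (1 / (p * (p - 1) + 1 - 1)) with (1 / (p - 1) - 1 / p) by (field; split; nra).
    lra.
Qed.

Lemma w2_sum_le_with_big_item (x : R) (l : list R) : 1 / 2 < x ->
  Forall (fun a => 0 < a) l -> (length l < k)%nat -> x + sumR l <= 1 ->
  sumR (map (w2 k) (x :: l)) <= lambda k - 1 / INR k.
Proof.
  intros Hx Hl Hlen HS. pose proof INR_k_ge3 as HK.
  rewrite lambda_eq_gaps, (seq_cons_pred 1 k) by lia.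
  simpl map. rewrite !sumR_cons, w2_big, sumR_w2_eq_excess by exact Hx.
  pose proof gap_1.
  assert (Hrest : sumR (map (excess k) l) <= sumR (map (gap k) (seq 2 (k - 1)))).
  { apply excess_sum_le_gaps; [lia| |exact Hl|rewrite pi_2; lra].
    replace (2 + (k - 1))%nat with (k + 1)%nat by lia.
    pose proof (pi_ge (k + 1) ltac:(lia)). rewrite plus_INR in *. simpl in *. lra. }
  assert (Hn : INR (length l) * (1 / INR k) <= (INR k - 1) * (1 / INR k)).
  { apply Rmult_le_compat_r; [apply Rlt_le, inv_k_pos|].
    apply (le_INR (S (length l))) in Hlen. rewrite S_INR in Hlen. lra. }
  replace ((INR k - 1) * (1 / INR k)) with (1 - 1 / INR k) in Hn by (field; lra).
  lra.
Qed.

Lemma w2_sum_le_of_items_le_half (L : list R) : Forall (fun a => 0 < a <= 1 / 2) L ->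
  (length L <= k)%nat -> sumR L <= 1 -> sumR (map (w2 k) L) <= lambda k - 1 / INR k.
Proof.
  intros HL Hlen HS. pose proof INR_k_ge3 as HK. pose proof inv_k_pos. pose proof inv_k_le_third.
  rewrite lambda_eq_gaps, (seq_cons_pred 1 k), (seq_cons_pred 2 (k - 1)) by lia.
  simpl map. rewrite !sumR_cons, sumR_w2_eq_excess.
  pose proof gap_1. pose proof gap_2.
  pose proof (sumR_nonneg _ (gaps_nonneg k (seq 3 (k - 1 - 1)))) as Hrest.
  assert (Hexc : sumR (map (excess k) L) <= (3 / 2 - 3 / INR k) * sumR L).
  { rewrite <- sumR_map_scal. apply sumR_map_le. eapply Forall_impl; [|exact HL].
    intros a [Ha Ha2]. apply excess_le_linear; assumption. }
  assert (Hexc1 : (3 / 2 - 3 / INR k) * sumR L <= 3 / 2 - 3 / INR k).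
  { rewrite <- (Rmult_1_r (3 / 2 - 3 / INR k)) at 2. apply Rmult_le_compat_l; lra. }
  assert (Hn : INR (length L) * (1 / INR k) <= INR k * (1 / INR k)).
  { apply Rmult_le_compat_r; [lra|]. apply le_INR, Hlen. }
  replace (INR k * (1 / INR k)) with 1 in Hn by (field; lra).
  lra.
Qed.

End Weight.

Theorem lemma3 (k : nat) (I : list R) :
  (3 <= k)%nat ->
  (length I <= k)%nat ->
  Forall (fun a => 0 < a <= 1) I ->
  sumR I <= 1 ->
  sumR (map (w2 k) I) <= lambda k - 1 / INR k.
Proof.
  intros Hk Hlen Hall Hsum.
  destruct (Forall_Exists_dec (fun a => a <= 1 / 2) (fun a => Rle_dec a (1 / 2)) I)
    as [Hsmall|Hbig].
  - apply w2_sum_le_of_items_le_half; [exact Hk| |exact Hlen|exact Hsum].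
    eapply Forall_impl; [|exact (Forall_and Hall Hsmall)]. simpl. intros a [[Ha _] Ha2]. lra.
  - apply Exists_exists in Hbig as (x & Hx & Hx2).
    destruct (In_Permutation_cons I x Hx) as [l Hperm].
    rewrite (sumR_perm _ _ (Permutation_map _ Hperm)).
    rewrite (sumR_perm _ _ Hperm) in Hsum. rewrite (Permutation_length Hperm) in Hlen.
    apply (Permutation_Forall Hperm), Forall_cons_iff in Hall as [_ Hl].
    apply w2_sum_le_with_big_item; [exact Hk|lra| |simpl in Hlen; lia|exact Hsum].
    eapply Forall_impl; [|exact Hl]. simpl. intros a [Ha _]. exact Ha.
Qed.
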